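(* Let $f:\mathbb{R}\to\mathbb{R}$ be strictly convex and continuously differentiable with $(f')^{-1}(x)\ge 0$ for all $x\in\mathbb{R}$. Fix $\alpha>0$, $\zeta\in(0,1)$, $\epsilon>0$, and set $\tilde\epsilon=\epsilon/(1-\zeta)$. For $v:\mathcal{S}\to\mathbb{R}$ and $\lambda\ge0$ on $\mathrm{supp}(\mu)$ define $A_v(s,a)=r(s,a)+\gamma\mathbb{E}_{s'\sim T(\cdot|s,a)}v(s')-v(s)$ and $$\mathcal{L}'(w,v,\lambda)=\zeta\,\mathbb{E}_{d^{\mathcal{D}}}\big[w A_v-\alpha f(w)\big]+(1-\gamma)\mathbb{E}_{s_0\sim\rho_0}[v(s_0)]+(1-\zeta)\,\mathbb{E}_{\mu}\big[w(A_v-\lambda)-\alpha f(w)+\tilde\epsilon\lambda\big],$$ and let $w^*=w^*_{v,\lambda}$ be the maximizer $w^*(s,a)=(f')^{-1}\big((A_v(s,a)-\mathbf{1}\{(s,a)\in\mathrm{supp}(\mu)\}\lambda(s,a))/\alpha\big)$ of $\max_{w\ge0}\mathcal{L}'(w,v,\lambda)$. Then the outer minimization problem $\min_{\lambda\ge 0,\,v}\mathcal{L}'(w^*_{v,\lambda},v,\lambda)$ is a convex optimization problem. Moreover, if $(\lambda^*,v^* )$ is an optimal solution, then $$\lambda^*(s,a)=\max\{0,\,A^*(s,a)-\alpha f'(\tilde\epsilon)\}\quad\forall (s,a)\in\mathrm{supp}(\mu),$$ where $A^*(s,a)=r(s,a)+\gamma\mathbb{E}_{s'\sim T(\cdot|s,a)}v^*(s')-v^*(s)$,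 and the optimal regularized advantage $\tilde A^*(s,a):=A^*(s,a)-\mathbf{1}\{(s,a)\in\mathrm{supp}(\mu)\}\lambda^*(s,a)$ satisfies $$\tilde A^*(s,a)=\begin{cases}A^*(s,a), & (s,a)\in\mathrm{supp}(d^{\mathcal{D}}),\\ \min\{\alpha f'(\tilde\epsilon),\,A^*(s,a)\}, & (s,a)\in\mathrm{supp}(\mu).\end{cases}$$
   Context: Setting: a Markov decision process with state space $\mathcal{S}$, action space $\mathcal{A}$, transition kernel $T(s'|s,a)$, reward function $r(s,a)$, discount factor $\gamma\in(0,1)$ and initial state distribution $\rho_0$. $d^{\mathcal{D}}$ is the empirical state-action distribution of an offline dataset, and $\mu$ is a state-action distribution with $\mathrm{supp}(\mu)\cap\mathrm{supp}(d^{\mathcal{D}})=\emptyset$ (out-of-distribution pairs). *)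

From HB Require Import structures.
From mathcomp Require Import all_boot all_order all_algebra.
From mathcomp Require Import all_classical all_reals all_analysis.
Set Implicit Arguments. Unset Strict Implicit. Unset Printing Implicit Defensive.
Import Order.TTheory GRing.Theory Num.Theory numFieldNormedType.Exports.
Local Open Scope ring_scope.

Section Defs.
Variables (R : realType) (S A : finType).

Definition adv (r : S -> A -> R) (T : S -> A -> S -> R) (gamma : R)
  (v : S -> R) (s : S) (a : A) : R :=
  r s a + gamma * (\sum_(s' : S) T s a s' * v s') - v s.

Definition suppmu_lam (mu : S -> A -> R) (lam : S -> A -> R) (s : S) (a : A) : R :=
  if 0 < mu s a then lam s a else 0.

Definition reg_adv r T gamma mu (v : S -> R) lam s a : R :=
  adv r T gamma v s a - suppmu_lam mu lam s a.

Definition Lprime (f : R -> R) (alpha zeta gamma epst : R)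
  (r : S -> A -> R) (T : S -> A -> S -> R) (rho0 : S -> R)
  (dD mu : S -> A -> R) (w : S -> A -> R) (v : S -> R) (lam : S -> A -> R) : R :=
  zeta * (\sum_(s : S) \sum_(a : A)
            dD s a * (w s a * adv r T gamma v s a - alpha * f (w s a)))
  + (1 - gamma) * (\sum_(s : S) rho0 s * v s)
  + (1 - zeta) * (\sum_(s : S) \sum_(a : A)
            mu s a * (w s a * (adv r T gamma v s a - lam s a)
                      - alpha * f (w s a) + epst * lam s a)).

(* w*_{v,lambda}(s,a) = (f')^{-1}((A_v(s,a) - 1{supp mu} lambda(s,a)) / alpha),
   where finv is (f')^{-1}. *)
Definition wstar (finv : R -> R) (alpha gamma : R) r T (mu : S -> A -> R)
  (v : S -> R) (lam : S -> A -> R) (s : S) (a : A) : R :=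
  finv (reg_adv r T gamma mu v lam s a / alpha).

Definition outer_obj f finv alpha zeta gamma epst r T rho0 dD mu
  (v : S -> R) (lam : S -> A -> R) : R :=
  Lprime f alpha zeta gamma epst r T rho0 dD mu
    (wstar finv alpha gamma r T mu v lam) v lam.

Definition feasible (mu lam : S -> A -> R) : Prop :=
  forall s a, 0 < mu s a -> 0 <= lam s a.

End Defs.

From HB Require Import structures.
From mathcomp Require Import all_boot all_order all_algebra.
From mathcomp Require Import all_classical all_reals all_analysis.
From mathcomp Require Import ring lra.
Import Order.TTheory GRing.Theory Num.Theory numFieldNormedType.Exports.
Set Implicit Arguments. Unset Strict Implicit.
Local Open Scope ring_scope.

(* Maximizing out [w] turns each term [w A - alpha f w] of L' into the convex conjugate
   [(alpha f)^*] evaluated at the regularized advantage, which is affine in [(v, lambda)];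
   hence the outer objective is convex.  For fixed [v] it separates over the pairs
   [(s, a)], and on supp(mu) the dependence on [lambda] is
   [(alpha f)^*(A - lambda) + epst lambda], whose slope
   [epst - (f')^-1 ((A - lambda) / alpha)] is increasing and vanishes at
   [A - lambda = alpha f'(epst)]; strict convexity of [(alpha f)^*] makes
   [max 0 (A - alpha f'(epst))] the unique minimizer over [lambda >= 0]. *)

Lemma is_derive_le_secant (R : realType) (f : R -> R) (x d df c : R) :
  is_derive x 1 f df ->
  (forall t, 0 < t < 1 -> f (x + t * d) - f x <= t * c) -> d * df <= c.
Proof.
move=> [fx1 <-] secant.
have fdx : differentiable f x by apply/derivable1_diffP.
have -> : d * 'D_1 f x = 'D_d f x by rewrite -derive1E deriveE // deriv1E.
have := cvg_dnbhs_at_right (@diff_derivable _ _ _ f x d fdx) => /cvgr_to_le; apply.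
near=> t.
have t01 : 0 < t < 1.
  by apply/andP; split; near: t; [exact: nbhs_right_gt | exact: nbhs_right_lt].
have [t_gt0 _] := andP t01.
by rewrite /= -[_ *: _]/(t^-1 * _) -[t *: d]/(t * d) (addrC (t * d))
  ler_pdivrMl // secant.
Unshelve. all: by end_near. Qed.

Section Conjugate.
Variables (R : realType) (f fp : R -> R).
Hypothesis f_strict_convex : forall x y t : R, 0 < x -> 0 < y -> x != y ->
  0 < t < 1 -> f (t * x + (1 - t) * y) < t * f x + (1 - t) * f y.
Hypothesis f_deriv : forall x : R, 0 < x -> is_derive x 1 f (fp x).

Lemma convex_tangent_le x0 x : 0 < x0 -> 0 < x -> f x0 + fp x0 * (x - x0) <= f x.
Proof.
move=> x0_gt0 x_gt0; have [->|x_neq] := eqVneq x x0; first by rewrite subrr mulr0 addr0.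
suff : (x - x0) * fp x0 <= f x - f x0 by lra.
apply: is_derive_le_secant (f_deriv x0_gt0) _ => t t01.
have -> : x0 + t * (x - x0) = t * x + (1 - t) * x0 by ring.
by have := f_strict_convex x_gt0 x0_gt0 x_neq t01; lra.
Qed.

Lemma convex_tangent_lt x0 x : 0 < x0 -> 0 < x -> x != x0 ->
  f x0 + fp x0 * (x - x0) < f x.
Proof.
move=> x0_gt0 x_gt0 x_neq.
have half01 : 0 < (2^-1 : R) < 1 by apply/andP; split; lra.
have mid_gt0 : 0 < 2^-1 * x + (1 - 2^-1) * x0 by lra.
have := f_strict_convex x_gt0 x0_gt0 x_neq half01.
have := convex_tangent_le x0_gt0 mid_gt0; lra.
Qed.

Lemma fp_lt x y : 0 < x -> x < y -> fp x < fp y.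
Proof.
move=> x_gt0 xy; have y_gt0 := lt_trans x_gt0 xy.
have := convex_tangent_lt x_gt0 y_gt0 (negbT (gt_eqF xy)).
have := convex_tangent_lt y_gt0 x_gt0 (negbT (lt_eqF xy)).
nra.
Qed.

Variables (finv : R -> R) (alpha : R).
Hypothesis finv_spec : forall y : R, 0 < finv y /\ fp (finv y) = y.
Hypothesis alpha_gt0 : 0 < alpha.

Lemma finv_le y1 y2 : y1 <= y2 -> finv y1 <= finv y2.
Proof.
have [w1_gt0 fp_w1] := finv_spec y1; have [w2_gt0 fp_w2] := finv_spec y2.
by move=> y12; rewrite leNgt; apply/negP => /(fp_lt w2_gt0); rewrite fp_w1 fp_w2 ltNge y12.
Qed.

(* [(alpha f)^*(y) = sup_(w > 0) (w y - alpha f w)], attained at [w = (f')^-1 (y / alpha)]. *)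
Definition conjf (y : R) : R := finv (y / alpha) * y - alpha * f (finv (y / alpha)).

Lemma fenchel_young_lt w y : 0 < w -> w != finv (y / alpha) ->
  w * y - alpha * f w < conjf y.
Proof.
rewrite /conjf; set w0 := finv (y / alpha) => w_gt0 w_neq.
have [w0_gt0 fp_w0] := finv_spec (y / alpha).
have := convex_tangent_lt w0_gt0 w_gt0 w_neq; rewrite fp_w0 -(ltr_pM2l alpha_gt0).
have -> : alpha * (f w0 + y / alpha * (w - w0)) = alpha * f w0 + y * (w - w0).
  by field; rewrite gt_eqF.
lra.
Qed.

Lemma fenchel_young w y : 0 < w -> w * y - alpha * f w <= conjf y.
Proof.
move=> w_gt0; have [->|w_neq] := eqVneq w (finv (y / alpha)); first by [].
exact/ltW/fenchel_young_lt.
Qed.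

Lemma conjf_convex y1 y2 t : 0 <= t <= 1 ->
  conjf (t * y1 + (1 - t) * y2) <= t * conjf y1 + (1 - t) * conjf y2.
Proof.
case/andP => t_ge0 t_le1; rewrite {1}/conjf.
have [w_gt0 _] := finv_spec ((t * y1 + (1 - t) * y2) / alpha).
have t'_ge0 : 0 <= 1 - t by lra.
have := ler_wpM2l t_ge0 (fenchel_young y1 w_gt0).
have := ler_wpM2l t'_ge0 (fenchel_young y2 w_gt0).
lra.
Qed.

Lemma conjf_tangent_lt y0 y : y != y0 ->
  conjf y0 + finv (y0 / alpha) * (y - y0) < conjf y.
Proof.
move=> y_neq; have [w0_gt0 fp_w0] := finv_spec (y0 / alpha).
have -> : conjf y0 + finv (y0 / alpha) * (y - y0) =
    finv (y0 / alpha) * y - alpha * f (finv (y0 / alpha)) by rewrite /conjf; ring.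
apply: fenchel_young_lt => //; apply: contra_neq y_neq => w_eq.
have : y0 / alpha = y / alpha by rewrite -fp_w0 w_eq (finv_spec _).2.
by move/(mulIf (invr_neq0 (lt0r_neq0 alpha_gt0))).
Qed.

Hypothesis finv_fp : forall x : R, 0 < x -> finv (fp x) = x.

Lemma conjf_penalty_lt a e l : 0 < e -> 0 <= l ->
  let lopt := Num.max 0 (a - alpha * fp e) in
  l != lopt -> conjf (a - lopt) + e * lopt < conjf (a - l) + e * l.
Proof.
move=> e_gt0 l_ge0 lopt l_neq.
have : a - l != a - lopt by apply: contra_neq l_neq => /addrI/oppr_inj.
move/conjf_tangent_lt; set w0 := finv _ => tangent.
(* [w0] is the slope of [conjf] at [a - lopt]: it is [e] if [lopt > 0] and at most [e] otherwise. *)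
suff : 0 <= (e - w0) * (l - lopt) by lra.
rewrite /w0 /lopt; case: (leP (a - alpha * fp e) 0) => a_le.
  rewrite !subr0 mulr_ge0 // subr_ge0 -[X in _ <= X](finv_fp e_gt0).
  by rewrite finv_le // ler_pdivrMr // mulrC -subr_le0.
by rewrite subKr [_ / alpha]mulrC mulKf ?gt_eqF // finv_fp // subrr mul0r.
Qed.

End Conjugate.

Lemma sum_pairD1 (V : nmodType) (S A : finType) (F : S -> A -> V) s a :
  \sum_(s' : S) \sum_(a' : A) F s' a' =
  F s a + \sum_(p : S * A | p != (s, a)) F p.1 p.2.
Proof. by rewrite pair_bigA (bigD1 (s, a)). Qed.

Lemma feasible_convex (R : realType) (S A : finType) (mu l1 l2 : S -> A -> R) t :
  feasible mu l1 -> feasible mu l2 -> 0 <= t <= 1 ->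
  feasible mu (fun s a => t * l1 s a + (1 - t) * l2 s a).
Proof.
move=> feas1 feas2 /andP[t_ge0 t_le1] s a mu_gt0.
by rewrite addr_ge0 ?mulr_ge0 ?subr_ge0 ?feas1 ?feas2.
Qed.

Section OuterObjective.
Variables (R : realType) (S A : finType).
Variables (r : S -> A -> R) (T : S -> A -> S -> R) (gamma : R) (rho0 : S -> R).
Variables (dD mu : S -> A -> R) (f fp finv : R -> R) (alpha zeta epst : R).

Lemma reg_adv_in_supp v l s a : 0 < mu s a ->
  reg_adv r T gamma mu v l s a = adv r T gamma v s a - l s a.
Proof. by rewrite /reg_adv /suppmu_lam => ->. Qed.

Lemma reg_adv_out_supp v l s a : ~~ (0 < mu s a) ->
  reg_adv r T gamma mu v l s a = adv r T gamma v s a.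
Proof. by rewrite /reg_adv /suppmu_lam => /negbTE ->; rewrite subr0. Qed.

Lemma reg_adv_affine v1 v2 l1 l2 t s a :
  reg_adv r T gamma mu (fun s => t * v1 s + (1 - t) * v2 s)
    (fun s a => t * l1 s a + (1 - t) * l2 s a) s a =
  t * reg_adv r T gamma mu v1 l1 s a + (1 - t) * reg_adv r T gamma mu v2 l2 s a.
Proof.
rewrite /reg_adv /suppmu_lam /adv.
have -> : \sum_(s' : S) T s a s' * (t * v1 s' + (1 - t) * v2 s') =
    t * (\sum_(s' : S) T s a s' * v1 s') + (1 - t) * (\sum_(s' : S) T s a s' * v2 s').
  by rewrite !mulr_sumr -big_split; apply: eq_bigr => s' _ /=; ring.
by case: ifP => _; ring.
Qed.

Hypotheses (dD_ge0 : forall s a, 0 <= dD s a) (mu_ge0 : forall s a, 0 <= mu s a).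
Hypothesis supp_disjoint : forall s a, ~ (0 < dD s a /\ 0 < mu s a).

Let J := outer_obj f finv alpha zeta gamma epst r T rho0 dD mu.
(* By disjointness of the supports, both the [dD]- and the [mu]-part of the [(s, a)]-term
   of [L'] at [w*] evaluate the conjugate at the regularized advantage. *)
Let integrand v l s a := (zeta * dD s a + (1 - zeta) * mu s a) *
  conjf f finv alpha (reg_adv r T gamma mu v l s a) + (1 - zeta) * mu s a * (epst * l s a).

Lemma dD_eq0_in_supp s a : 0 < mu s a -> dD s a = 0.
Proof.
move=> mu_gt0; have := dD_ge0 s a; rewrite le0r => /orP[/eqP //|dD_gt0].
by case: (supp_disjoint (conj dD_gt0 mu_gt0)).
Qed.

Lemma outer_objE v l : J v l =
  \sum_(s : S) \sum_(a : A) integrand v l s a + (1 - gamma) * \sum_(s : S) rho0 s * v s.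
Proof.
rewrite /J /outer_obj /Lprime addrAC; congr (_ + _).
rewrite !mulr_sumr -big_split; apply: eq_bigr => s _.
rewrite !mulr_sumr -big_split; apply: eq_bigr => a _ /=.
rewrite /integrand /conjf /wstar.
have [mu_gt0|mu_ngt0] := boolP (0 < mu s a).
  by rewrite dD_eq0_in_supp // reg_adv_in_supp //; ring.
have mu0 : mu s a = 0 by apply/eqP; rewrite eq_le mu_ge0 andbT leNgt.
by rewrite mu0 reg_adv_out_supp //; ring.
Qed.

Hypothesis f_strict_convex : forall x y t : R, 0 < x -> 0 < y -> x != y ->
  0 < t < 1 -> f (t * x + (1 - t) * y) < t * f x + (1 - t) * f y.
Hypothesis f_deriv : forall x : R, 0 < x -> is_derive x 1 f (fp x).
Hypothesis finv_spec : forall y : R, 0 < finv y /\ fp (finv y) = y.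
Hypotheses (alpha_gt0 : 0 < alpha) (zeta01 : 0 < zeta < 1).

Lemma outer_obj_convex v1 v2 l1 l2 t : 0 <= t <= 1 ->
  J (fun s => t * v1 s + (1 - t) * v2 s) (fun s a => t * l1 s a + (1 - t) * l2 s a)
  <= t * J v1 l1 + (1 - t) * J v2 l2.
Proof.
move=> t01; have [t_ge0 t_le1] := andP t01; have [zeta_gt0 zeta_lt1] := andP zeta01.
rewrite !outer_objE.
have rho_affine : \sum_(s : S) rho0 s * (t * v1 s + (1 - t) * v2 s) =
    t * (\sum_(s : S) rho0 s * v1 s) + (1 - t) * (\sum_(s : S) rho0 s * v2 s).
  by rewrite !mulr_sumr -big_split; apply: eq_bigr => s _ /=; ring.
rewrite rho_affine.
suff : \sum_(s : S) \sum_(a : A) integrand (fun s => t * v1 s + (1 - t) * v2 s)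
           (fun s a => t * l1 s a + (1 - t) * l2 s a) s a <=
       t * (\sum_(s : S) \sum_(a : A) integrand v1 l1 s a) +
       (1 - t) * (\sum_(s : S) \sum_(a : A) integrand v2 l2 s a) by lra.
rewrite !mulr_sumr -big_split; apply: ler_sum => s _.
rewrite !mulr_sumr -big_split; apply: ler_sum => a _ /=.
rewrite /integrand reg_adv_affine.
have weight_ge0 : 0 <= zeta * dD s a + (1 - zeta) * mu s a.
  by apply: addr_ge0; apply: mulr_ge0 => //; lra.
have := ler_wpM2l weight_ge0 (conjf_convex f_strict_convex f_deriv finv_spec alpha_gt0
  (reg_adv r T gamma mu v1 l1 s a) (reg_adv r T gamma mu v2 l2 s a) t01).
lra.
Qed.

Hypotheses (finv_fp : forall x : R, 0 < x -> finv (fp x) = x) (epst_gt0 : 0 < epst).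

Lemma outer_obj_opt_lambda vstar lstar s a : feasible mu lstar ->
  (forall l, feasible mu l -> J vstar lstar <= J vstar l) -> 0 < mu s a ->
  lstar s a = Num.max 0 (adv r T gamma vstar s a - alpha * fp epst).
Proof.
move=> lstar_feas lstar_opt mu_gt0; set lopt := Num.max 0 _.
apply/eqP; apply: contraT => lstar_neq.
(* Resetting [lstar] to [lopt] at [(s, a)] changes only the [(s, a)]-term, and lowers it. *)
pose l' s' a' := if (s', a') == (s, a) then lopt else lstar s' a'.
have l'_feas : feasible mu l'.
  by move=> s' a' /lstar_feas; rewrite /l'; case: ifP => // _ _; rewrite le_max lexx.
have := lstar_opt l' l'_feas; rewrite !outer_objE !(sum_pairD1 _ s a).
have -> : \sum_(p | p != (s, a)) integrand vstar l' p.1 p.2 =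
          \sum_(p | p != (s, a)) integrand vstar lstar p.1 p.2.
  by apply: eq_bigr => -[s' a'] /negbTE ne; rewrite /integrand /reg_adv /suppmu_lam /l' /= ne.
rewrite !lerD2r /integrand !reg_adv_in_supp // dD_eq0_in_supp // /l' eqxx.
have [_ zeta_lt1] := andP zeta01.
have weight_gt0 : 0 < (1 - zeta) * mu s a by rewrite mulr_gt0 // subr_gt0.
have := conjf_penalty_lt f_strict_convex f_deriv finv_spec alpha_gt0 finv_fp
  epst_gt0 (lstar_feas s a mu_gt0) lstar_neq.
rewrite -(ltr_pM2l weight_gt0) -/lopt; lra.
Qed.

End OuterObjective.

Theorem proposition2 (R : realType) (S A : finType)
  (T : S -> A -> S -> R) (r : S -> A -> R) (gamma : R) (rho0 : S -> R)
  (dD mu : S -> A -> R)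
  (f fp finv : R -> R) (alpha zeta eps : R) :
  (* MDP *)
  0 < gamma < 1 ->
  (forall s a s', 0 <= T s a s') ->
  (forall s a, \sum_(s' : S) T s a s' = 1) ->
  (forall s, 0 <= rho0 s) -> \sum_(s : S) rho0 s = 1 ->
  (* dataset distribution and OOD distribution with disjoint supports *)
  (forall s a, 0 <= dD s a) -> \sum_(s : S) \sum_(a : A) dD s a = 1 ->
  (forall s a, 0 <= mu s a) -> \sum_(s : S) \sum_(a : A) mu s a = 1 ->
  (forall s a, ~ (0 < dD s a /\ 0 < mu s a)) ->
  (* f strictly convex and C^1 on its domain (0, +oo), with derivative fp *)
  (forall x y t : R, 0 < x -> 0 < y -> x != y -> 0 < t < 1 ->
     f (t * x + (1 - t) * y) < t * f x + (1 - t) * f y) ->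
  (forall x : R, 0 < x -> is_derive x 1 f (fp x)) ->
  {in `]0, +oo[, continuous fp} ->
  (* finv = (f')^{-1} : R -> R, defined on all of R; its values lie in the domain (0,+oo) *)
  (forall y : R, 0 < finv y /\ fp (finv y) = y) ->
  (forall x : R, 0 < x -> finv (fp x) = x) ->
  (* parameters *)
  0 < alpha -> 0 < zeta < 1 -> 0 < eps ->
  let epst := eps / (1 - zeta) in
  let J := outer_obj f finv alpha zeta gamma epst r T rho0 dD mu in
  (* (1) the outer problem min_{lambda >= 0, v} J(v, lambda) is convex:
         convex feasible set and convex objective on it *)
  (forall (v1 v2 : S -> R) (l1 l2 : S -> A -> R) (t : R),
     feasible mu l1 -> feasible mu l2 -> 0 <= t <= 1 ->
     let v := fun s => t * v1 s + (1 - t) * v2 s in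
     let l := fun s a => t * l1 s a + (1 - t) * l2 s a in
     feasible mu l /\ J v l <= t * J v1 l1 + (1 - t) * J v2 l2)
  /\
  (* (2) characterization of an optimal solution *)
  (forall (vstar : S -> R) (lstar : S -> A -> R),
     feasible mu lstar ->
     (forall (v : S -> R) (l : S -> A -> R), feasible mu l -> J vstar lstar <= J v l) ->
     let Astar := adv r T gamma vstar in
     let Atilde := reg_adv r T gamma mu vstar lstar in
     (forall s a, 0 < mu s a -> lstar s a = Num.max 0 (Astar s a - alpha * fp epst))
     /\ (forall s a, 0 < dD s a -> Atilde s a = Astar s a)
     /\ (forall s a, 0 < mu s a -> Atilde s a = Num.min (alpha * fp epst) (Astar s a))).
Proof.
move=> _ _ _ _ _ dD_ge0 _ mu_ge0 _ supp_disjoint f_strict_convex f_deriv _ finv_spec finv_fp.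
move=> alpha_gt0 zeta01 eps_gt0 epst J.
have epst_gt0 : 0 < epst by rewrite divr_gt0 // subr_gt0; case/andP: zeta01.
split=> [v1 v2 l1 l2 t feas1 feas2 t01 v l|vstar lstar lstar_feas lstar_opt Astar Atilde].
  split; first exact: feasible_convex.
  exact: (outer_obj_convex r T gamma rho0 epst dD_ge0 mu_ge0 supp_disjoint f_strict_convex
    f_deriv finv_spec alpha_gt0 zeta01).
have lstarE s a : 0 < mu s a -> lstar s a = Num.max 0 (Astar s a - alpha * fp epst).
  exact: (outer_obj_opt_lambda dD_ge0 mu_ge0 supp_disjoint f_strict_convex f_deriv
    finv_spec alpha_gt0 zeta01 finv_fp epst_gt0 lstar_feas (lstar_opt vstar)).
split=> //; split=> s a supp.
  rewrite /Atilde reg_adv_out_supp //; apply/negP => mu_gt0.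
  exact: supp_disjoint (conj supp mu_gt0).
by rewrite /Atilde reg_adv_in_supp // lstarE // oppr_max addr_minr oppr0 addr0 opprB subrKC minC.
Qed.
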